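(* Let $X=\{1,\ldots,K\}$. The family $f_n:X^n\to\mathbb{Q}^K$, $f_n(x)=(p_1(x),\ldots,p_K(x))$, is computable with infinite memory (with output set $Y=\mathbb{Q}^K$, or its subset $(\mathbb{Q}\cap[0,1])^K$, together with a default element).
   Context: Model of computation. Let $X$ (initial values), $Y$ (outputs), $M$ (messages) be sets and, for each integer $d\ge 0$, let $Z_d$ be a set (memory states); each of $Y$, $M$, $Z_d$ contains a distinguished element $\emptyset$. An automaton family is a sequence of maps $(A_d)_{d\ge0}$, $A_d: X\times Z_d\times Y\times M^d\to X\times Z_d\times Y\times M^d$, which leave the first coordinate unchanged. A network is a finite connected simple undirected graph $G=(V,E)$ with $V=\{1,\ldots,n\}$, together with a port labeling: for each node $i$ of degree $d(i)$, a bijection $\ell_i$ from the set of neighbors of $i$ to $\{1,\ldots,d(i)\}$. Given initial values $x_1,\ldots,x_n\in X$, the execution is: node $i$ has state $S_i(t)=(x_i,z_i(t),y_i(t),m_{i,1}(t),\ldots,m_{i,d(i)}(t))$ with $z_i(0)=y_i(0)=m_{i,k}(0)=\emptyset$ ($m_{i,p}(t)$ is the message $i$ sends through its port $p$), and $S_i(t+1)=A_{d(i)}(x_i,z_i(t),y_i(t),\mu_{i,1}(t),\ldots,\mu_{i,d(i)}(t))$, where if $j$ is the neighbor of $i$ with $\ell_i(j)=k$ then $\mu_{i,k}(t)=m_{j,\ell_j(i)}(t)$. An element $y^*\in Y$ is the final output of the execution if there is $t'$ with $y_i(t)=y^*$ for all nodes $i$ and all $t\ge t'$. Infinite memory: $X$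 and $M$ are finite, while the sets $Z_d$ and $Y$ may be countable. A family of functions $(f_n:X^n\to Y)_{n\ge1}$ is computable with infinite memory if there exists an automaton family with infinite memory such that for every $n$, every network with $n$ nodes (every connected graph and every port labeling), and every $x\in X^n$, the execution has a final output equal to $f_n(x_1,\ldots,x_n)$. Proportions. For $X=\{1,\ldots,K\}$ and $x\in X^n$, $p_k(x)=|\{i: x_i=k\}|/n$. *)

From HB Require Import structures.
From mathcomp Require Import all_boot all_order all_algebra.
Unset Strict Implicit. Unset Printing Implicit Defensive.
Import Order.TTheory GRing.Theory Num.Theory.

(* A network on nodes 'I_n (node i of the paper = ordinal i-1).
   The port labeling l_i is represented by its inverse  nbr i : 'I_(deg i) -> 'I_n
   (port k of node i leads to neighbor nbr i k), which is a bijection onto the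
   neighbours of i; back i k is the port of nbr i k leading back to i, i.e.
   l_{nbr i k}(i). *)
Record network (n : nat) := Network {
  adj : rel 'I_n;
  adj_sym : symmetric adj;
  adj_irr : irreflexive adj;
  adj_conn : forall i j, connect adj i j;
  deg : 'I_n -> nat;
  nbr : forall i, 'I_(deg i) -> 'I_n;
  nbr_inj : forall i, injective (nbr i);
  nbr_adj : forall i j, adj i j <-> exists k, nbr i k = j;
  back : forall i (k : 'I_(deg i)), 'I_(deg (nbr i k));
  backP : forall i k, nbr (nbr i k) (back i k) = i
}.

Record automaton (X Y M : Type) (Z : nat -> Type) := Automaton {
  trans : forall d, X * Z d * Y * {ffun 'I_d -> M} -> X * Z d * Y * {ffun 'I_d -> M};
  trans_fst : forall d s, (trans d s).1.1.1 = s.1.1.1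
}.

Arguments deg {n} _ i.
Arguments nbr {n} _ i k.
Arguments back {n} _ i k.
Arguments trans {X Y M Z} _ d s.

Section Exec.

Variables (X Y M : Type) (Z : nat -> Type) (A : automaton X Y M Z)
  (z0 : forall d, Z d) (y0 : Y) (m0 : M) (n : nat) (N : network n) (x : 'I_n -> X).

Fixpoint exec (t : nat) : forall i : 'I_n,
    X * Z (deg N i) * Y * {ffun 'I_(deg N i) -> M} :=
  match t with
  | 0 => fun i => (x i, z0 (deg N i), y0, [ffun => m0])
  | t'.+1 => fun i =>
      let s := exec t' i in
      trans A (deg N i) (s.1.1.1, s.1.1.2, s.1.2,
               [ffun k => (exec t' (nbr N i k)).2 (back N i k)])
  end.

Definition final_output (ystar : Y) : Prop :=
  exists t', forall t, t' <= t -> forall i, (exec t i).1.2 = ystar.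
End Exec.
Arguments exec {X Y M Z} _ z0 y0 m0 {n} _ x t i.
Arguments final_output {X Y M Z} _ z0 y0 m0 {n} _ x ystar.

Definition computable_inf_mem (X : finType) (Y : countType) (y0 : Y)
    (f : forall n, ('I_n -> X) -> Y) : Prop :=
  exists (M : finType) (m0 : M) (Z : nat -> countType) (z0 : forall d, Z d)
         (A : automaton X Y M Z),
    forall n, 0 < n -> forall (N : network n) (x : 'I_n -> X),
      final_output A z0 y0 m0 N x (f n x).

Definition proportions {K n : nat} (x : 'I_n -> 'I_K) : {ffun 'I_K -> rat} :=
  [ffun k => ((#|[pred i | x i == k]|)%:R / n%:R)%R].

From mathcomp Require Import all_boot all_order all_algebra zify.
Set Implicit Arguments. Unset Strict Implicit. Unset Printing Implicit Defensive.
Import GRing.Theory Num.Theory.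

(* Idea: every node runs color refinement with port numbers.  The color of
   round 0 of node i is its initial value, its color of round j.+1 encodes its
   color of round j and the list of (color of round j, back port) of its
   neighbours; colors are natural numbers, via pickle.  Since messages must
   come from a finite alphabet, colors are exchanged bit by bit in unary: on
   port p a node streams the code of p :: (its colors so far), one bit per
   round, and a node computes its next color once every buffer decodes into
   enough numbers.  Every node eventually knows arbitrarily many colors
   (progress), and its known colors are always the true ones (invariant).

   A node knowing its color c of round L reads from c the set S of distinct
   colors of round s = L./2 of all nodes within distance L - s.  Refinement
   stabilises at some round s0, and for a stable round all color classes have
   the same size (the network is connected and ports are bijective), so
   counting colors in S counts nodes up to a common factor.  Hence, once
   L >= 2 (s0 + n), the proportion of colors in S with initial value k is
   exactly p_k(x), and the output never changes afterwards. *)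

Definition enc (c : nat) : seq bool := nseq c true ++ [:: false].
Definition encl (l : seq nat) : seq bool := flatten (map enc l).

Fixpoint decode_from (c : nat) (s : seq bool) : seq nat :=
  match s with
  | [::] => [::]
  | true :: s' => decode_from c.+1 s'
  | false :: s' => c :: decode_from 0 s'
  end.
Definition decode (s : seq bool) : seq nat := decode_from 0 s.

Lemma size_enc c : size (enc c) = c.+1.
Proof. by rewrite size_cat size_nseq addn1. Qed.

Lemma encl_cat l1 l2 : encl (l1 ++ l2) = encl l1 ++ encl l2.
Proof. by rewrite /encl map_cat flatten_cat. Qed.

Lemma decode_from_ones c a s :
  decode_from c (nseq a true ++ s) = decode_from (c + a) s.
Proof. by elim: a c => [|a IH] c /=; rewrite ?addn0 // IH addSnnS. Qed.

Lemma decode_enc c s : decode (enc c ++ s) = c :: decode s.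
Proof. by rewrite /decode /enc -catA decode_from_ones. Qed.

(* This is
   what a receiver knows after getting the first a bits of a transmission. *)
Lemma decode_prefix l a : exists k, decode (take a (encl l)) = take k l /\
  forall L, L <= size l -> size (encl (take L l)) <= a -> L <= k.
Proof.
elim: l a => [|c l IH] a.
  by exists 0; split => // L; rewrite leqn0 => /eqP ->.
rewrite /encl /= -/(encl l).
have [a_le_c | c_lt_a] := leqP a c.
  exists 0; split => [|[|L] //].
    rewrite takel_cat ?size_enc 1?ltnW // /enc takel_cat ?size_nseq //.
    by rewrite take_nseq // /decode -[nseq _ _]cats0 decode_from_ones.
  rewrite /encl /= size_cat size_enc => _ size_le.
  by move: (leq_trans (leq_addr _ _) size_le); rewrite ltnNge a_le_c.
have [k [dec_k k_max]] := IH (a - c.+1).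
exists k.+1; split.
  by rewrite take_cat size_enc ltnNge c_lt_a /= decode_enc dec_k.
case=> [|L] //= le_L; rewrite /encl /= size_cat size_enc -/(encl _) => size_le.
by rewrite ltnS k_max // leq_subRL // addnC.
Qed.

(* Appending the next item (if any) of an extension s2 of s1 to a prefix of
   s1: this is how a buffer grows by one received bit. *)
Lemma take_next_bit (T : Type) (x0 : T) (s1 s2 : seq T) a r :
  a <= size s1 -> s2 = s1 ++ r ->
  take a s1 ++ seq_of_opt (if a < size s2 then Some (nth x0 s2 a) else None)
  = take (a + (a < size s2)) s2.
Proof.
move=> le_a def_s2; have -> : take a s1 = take a s2 by rewrite def_s2 takel_cat.
case: ltnP => [lt_a | _]; last by rewrite addn0 cats0.
by rewrite addn1 (take_nth x0 lt_a) cats1.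
Qed.

(* A color can be unpacked into the previous color and the list of the
   (neighbour color, port) pairs. *)
Definition unpack (c : nat) : nat * seq (nat * nat) :=
  odflt (0, [::]) (unpickle c : option (nat * seq (nat * nat))).

(* ball c m lists the colors, m rounds earlier, of the nodes at distance at
   most m from a node whose color is c. *)
Fixpoint ball (c m : nat) : seq nat :=
  match m with
  | 0 => [:: c]
  | m'.+1 => ball (unpack c).1 m' ++ flatten [seq ball e.1 m' | e <- (unpack c).2]
  end.

(* The initial value stored at the bottom of a color of round s. *)
Definition root_value (s c : nat) : nat :=
  (unpack (iter s (fun c => (unpack c).1) c)).1.

Section Refinement.
Variables (n : nat) (N : network n) (xv : 'I_n -> nat).

(* Ports as naturals: port p of node i leads to nbrn i p, where it is received
   on port backn i p (both are meaningless for p >= deg N i). *)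
Definition nbrn (i : 'I_n) (p : nat) : 'I_n :=
  if insub p is Some k then nbr N i k else i.
Definition backn (i : 'I_n) (p : nat) : nat :=
  if insub p is Some k then val (back N i k) else 0.

Lemma nbrn_val i (k : 'I_(deg N i)) : nbrn i k = nbr N i k.
Proof. by rewrite /nbrn valK. Qed.

Lemma backn_val i (k : 'I_(deg N i)) : backn i k = back N i k.
Proof. by rewrite /backn valK. Qed.

Lemma nbrnK i p : p < deg N i ->
  nbrn (nbrn i p) (backn i p) = i /\ backn i p < deg N (nbrn i p).
Proof.
by move=> lt_p; rewrite -[p]/(val (Ordinal lt_p)) nbrn_val backn_val nbrn_val backP.
Qed.

Lemma adj_nbrn i w : adj _ N i w -> exists2 p, p < deg N i & nbrn i p = w.
Proof. by move/(nbr_adj _ N) => [k <-]; exists k; rewrite ?nbrn_val. Qed.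

(* Color refinement with port numbers: the color of round 0 is the initial
   value, the color of round j.+1 encodes (as a natural number) the color of
   round j together with the list of the round-j colors of the neighbours and
   of the ports through which they are reached.  color j i thus determines the
   port-labelled view of depth j of node i. *)
Fixpoint color (j : nat) (i : 'I_n) : nat :=
  match j with
  | 0 => pickle (xv i, [::] : seq (nat * nat))
  | j'.+1 => pickle (color j' i,
      [seq (color j' (nbrn i p), backn i p) | p <- iota 0 (deg N i)])
  end.

Lemma color_succ j i : color j.+1 i =
  pickle (color j i, [seq (color j (nbrn i p), backn i p) | p <- iota 0 (deg N i)]).
Proof. by []. Qed.

Lemma color_inj j u v : color j.+1 u = color j.+1 v ->
  [/\ color j u = color j v, deg N u = deg N v &
   forall p, p < deg N u ->
     color j (nbrn u p) = color j (nbrn v p) /\ backn u p = backn v p].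
Proof.
move=> /(pcan_inj pickleK) [eq_col eq_nbrs].
have eq_deg : deg N u = deg N v.
  by move: (congr1 size eq_nbrs); rewrite !size_map !size_iota.
split=> // p lt_p; move: (congr1 (nth (0, 0)^~ p) eq_nbrs).
by rewrite !(nth_map 0) ?size_iota -?eq_deg // !nth_iota -?eq_deg //; case.
Qed.

Definition stable (s : nat) :=
  forall u v, color s u = color s v -> color s.+1 u = color s.+1 v.

Lemma stable_succ s : stable s -> stable s.+1.
Proof.
move=> st u v /color_inj [/st eq_col eq_deg eq_nbrs].
rewrite (color_succ s.+1 u) (color_succ s.+1 v) eq_col -eq_deg.
congr (pickle (_, _)).
apply/eq_in_map => p; rewrite mem_iota => /andP [_ lt_p].
by have [/st -> ->] := eq_nbrs p lt_p.
Qed.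

Lemma stable_le s s' : s <= s' -> stable s -> stable s'.
Proof. by move/subnK <-; elim: (s' - s) => //= d IH /IH /stable_succ. Qed.

Definition same_color j := [set uv : 'I_n * 'I_n | color j uv.1 == color j uv.2].

Lemma same_color_succ j : same_color j.+1 \subset same_color j.
Proof. by apply/subsetP => -[u v]; rewrite !inE => /eqP /color_inj [-> _ _]. Qed.

(* Refinement stabilises: #|same_color j| cannot decrease strictly more than
   #|same_color 0| times. *)
Lemma stable_exists : exists s, stable s.
Proof.
pose f j := #|same_color j|.
have [/existsP [j /eqP eq_f] | /existsPn no_stop] :=
  boolP [exists j : 'I_(f 0).+1, f j.+1 == f j].
  exists j => u v eq_col.
  have : (u, v) \in same_color j by rewrite inE eq_col.
  have /eqP <- : same_color j.+1 == same_color j.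
    by rewrite eqEcard same_color_succ -/(f j) -eq_f leqnn.
  by rewrite inE => /eqP.
suff /(_ (f 0).+1 (leqnn _)) : forall j, j <= (f 0).+1 -> f j + j <= f 0.
  by rewrite addnS ltnNge leq_addl.
elim=> [|j IH] lt_j; first by rewrite addn0.
have lt_f : f j.+1 < f j.
  rewrite ltn_neqAle subset_leq_card ?same_color_succ // andbT.
  exact: no_stop (Ordinal lt_j).
by rewrite addnS (leq_trans _ (IH (ltnW lt_j))) // ltn_add2r.
Qed.

Section StableClasses.
Variable s : nat.
Hypothesis st : stable s.

Definition color_class u := [set v | color s v == color s u].

(* Following port p is injective on a stable class (the neighbours send back
   through the same port) and maps it into the class of the neighbour. *)
Lemma card_class_nbr u p : p < deg N u ->
  #|color_class u| <= #|color_class (nbrn u p)|.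
Proof.
move=> lt_p.
have same_port v : v \in color_class u -> [/\ p < deg N v,
    color s (nbrn v p) = color s (nbrn u p) & backn v p = backn u p].
  rewrite inE => /eqP /st /color_inj [_ eq_deg eq_nbrs].
  by rewrite eq_deg; have [] := eq_nbrs p; rewrite ?eq_deg.
have inj : {in color_class u &, injective (nbrn^~ p)}.
  move=> v1 v2 /same_port [lt1 _ b1] /same_port [lt2 _ b2] eq_nbr.
  by rewrite -(nbrnK lt1).1 -(nbrnK lt2).1 eq_nbr b1 b2.
rewrite -(card_in_imset inj); apply/subset_leq_card/subsetP => w.
by case/imsetP => v /same_port [_ eq_col _] ->; rewrite inE eq_col.
Qed.

Lemma card_class_adj u w : adj _ N u w -> #|color_class u| = #|color_class w|.
Proof.
move=> /adj_nbrn [p lt_p <-]; apply/eqP; rewrite eqn_leq card_class_nbr //=.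
by have [back_u lt_back] := nbrnK lt_p; rewrite -{2}back_u card_class_nbr.
Qed.

Lemma card_class_eq u w : #|color_class u| = #|color_class w|.
Proof.
have /connectP [pth path_uw ->] := adj_conn _ N u w.
elim: pth u path_uw => [|a pth IH] u //= /andP [adj_ua path_a].
by rewrite (card_class_adj adj_ua) IH.
Qed.

Lemma card_colors_in i0 (P : pred nat) (S : seq nat) :
  uniq S -> (forall e, e \in S -> exists v, e = color s v) ->
  #|[set v | P (color s v) && (color s v \in S)]| = count P S * #|color_class i0|.
Proof.
elim: S => [|e S IH] /= => [_ _ | /andP [e_notin uniqS] S_cols].
  by apply/eqP; rewrite mul0n cards_eq0; apply/eqP/setP => v; rewrite !inE andbF.
have [v0 def_e] := S_cols e (mem_head _ _).
have S'_cols e' : e' \in S -> exists v, e' = color s v.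
  by move=> Se'; apply: S_cols; rewrite inE Se' orbT.
have split_e : [set v | P (color s v) && (color s v \in e :: S)] =
    [set v | P (color s v) && (color s v == e)] :|:
    [set v | P (color s v) && (color s v \in S)].
  by apply/setP => v; rewrite !inE andb_orr.
rewrite split_e cardsU (IH uniqS S'_cols).
have -> : [set v | P (color s v) && (color s v == e)] :&:
          [set v | P (color s v) && (color s v \in S)] = set0.
  apply/setP => v; rewrite !inE.
  by case: eqP => [-> | _]; rewrite ?(negbTE e_notin) !andbF.
rewrite cards0 subn0 mulnDl; congr (_ + _); rewrite def_e.
have [P_v0 | nP_v0] := boolP (P (color s v0)); rewrite /= ?mul1n ?mul0n.
  rewrite (card_class_eq i0 v0); apply: eq_card => v; rewrite !inE.
  by case: eqP => [-> | _]; rewrite ?P_v0 ?andbF.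
apply/eqP; rewrite cards_eq0; apply/eqP/setP => v; rewrite !inE.
by case: eqP => [-> | _]; rewrite ?(negbTE nP_v0) ?andbF.
Qed.
End StableClasses.

Lemma unpack_color j i : unpack (color j.+1 i) =
  (color j i, [seq (color j (nbrn i p), backn i p) | p <- iota 0 (deg N i)]).
Proof. by rewrite /unpack /= pickleK. Qed.

Lemma ball_colors m j i e : e \in ball (color (j + m) i) m -> exists v, e = color j v.
Proof.
elim: m i e => [|m IH] i e /=; first by rewrite addn0 inE => /eqP ->; exists i.
rewrite addnS unpack_color /= mem_cat => /orP [/IH //|].
by case/flatten_mapP => _ /mapP [p _ ->] /IH.
Qed.

Lemma ball_path m j i p : path (adj _ N) i p -> size p <= m ->
  color j (last i p) \in ball (color (j + m) i) m.
Proof.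
elim: m i p => [|m IH] i [|w p] //=; rewrite ?addn0 ?inE //.
  by move=> _ _; rewrite addnS unpack_color mem_cat (IH i [::]).
case/andP => /adj_nbrn [q lt_q def_w] path_w size_p.
rewrite addnS unpack_color mem_cat; apply/orP; right; apply/flatten_mapP.
exists (color (j + m) w, backn i q); last exact: IH.
by apply/mapP; exists q; rewrite ?def_w // mem_iota.
Qed.

Lemma root_value_color s v : root_value s (color s v) = xv v.
Proof.
rewrite /root_value; suff -> : iter s (fun c => (unpack c).1) (color s v) = color 0 v.
  by rewrite /unpack /= pickleK.
by elim: s => [|s IH] //; rewrite iterSr unpack_color.
Qed.

(* Main counting fact: from its color of round s + m, with m >= n and round s
   stable, a node reads the exact proportion of every initial value k: the
   ball contains the colors of all nodes, and each color class has the same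
   size. *)
Lemma proportion_from_ball s m i k : n <= m -> stable s ->
  let S := undup (ball (color (s + m) i) m) in
  ((count (fun e => root_value s e == k) S)%:R / (size S)%:R
    = (#|[pred v | xv v == k]|)%:R / n%:R :> rat)%R.
Proof.
move=> le_nm st S.
have S_cols e : e \in S -> exists v, e = color s v.
  by rewrite mem_undup => /ball_colors.
have S_all v : color s v \in S.
  rewrite mem_undup; have /connectP [p path_p ->] := adj_conn _ N i v.
  have [p' path_p' uniq_p' _] := shortenP path_p.
  apply: ball_path => //; apply: leq_trans le_nm.
  have := max_card (mem (i :: p')).
  by rewrite card_ord (card_uniqP uniq_p') => /ltnW.
have count_k :=
  card_colors_in st i (fun e => root_value s e == k) (undup_uniq _) S_cols.
have count_all := card_colors_in st i predT (undup_uniq _) S_cols.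
have card_k : #|[set v | (root_value s (color s v) == k) && (color s v \in S)]|
              = #|[pred v | xv v == k]|.
  by rewrite -cardsE; apply: eq_card => v; rewrite !inE root_value_color S_all andbT.
have card_n : n = size S * #|color_class s i|.
  rewrite -count_predT -count_all -{1}(card_ord n) -cardsT.
  by apply: eq_card => v; rewrite !inE S_all.
have -> : (n%:R = (size S * #|color_class s i|)%:R :> rat)%R by rewrite -card_n.
rewrite -card_k count_k !natrM -mulf_div divff ?mulr1 //.
by rewrite pnatr_eq0 -lt0n; apply/card_gt0P; exists i; rewrite inE.
Qed.
End Refinement.

Definition values K n (x : 'I_n -> 'I_K) (v : 'I_n) : nat := val (x v).

Definition estimate (K c L : nat) : {ffun 'I_K -> rat} :=
  let s := L./2 in let S := undup (ball c (L - s)) in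
  [ffun k : 'I_K =>
     ((count (fun e => root_value s e == val k) S)%:R / (size S)%:R)%R].

Lemma estimate_correct K n (N : network n) (x : 'I_n -> 'I_K) s0 L i :
  stable N (values x) s0 -> (s0 + n).*2 <= L ->
  estimate K (color N (values x) L i) L = proportions x.
Proof.
move=> st le_L; apply/ffunP => k; rewrite !ffunE.
set s := L./2; set m := L - s.
have le_s : s0 + n <= s by rewrite /s -(doubleK (s0 + n)) half_leq.
have le_ss : s + s <= L by rewrite addnn /s halfK leq_subr.
have le_sm : s <= m by rewrite /m leq_subRL // (leq_trans (leq_addr _ _) le_ss).
have -> : L = s + m by rewrite /m subnKC // (leq_trans (leq_addr _ _) le_ss).
rewrite proportion_from_ball.
- by congr (_%:R / _)%R; apply: eq_card => v; rewrite /= val_eqE.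
- exact: leq_trans (leq_addl _ _) (leq_trans le_s le_sm).
- exact: stable_le (leq_trans (leq_addr _ _) le_s) st.
Qed.

Definition eventually (P : nat -> Prop) := exists T, forall t, T <= t -> P t.

Lemma eventually_forall (F : finType) (P : F -> nat -> Prop) :
  (forall a, eventually (P a)) -> eventually (fun t => forall a, P a t).
Proof.
move=> /fin_all_exists [T HT]; exists (\max_a T a) => t le_t a.
exact/HT/(leq_trans (leq_bigmax a) le_t).
Qed.

Section Automaton.
Variable K : nat.

(* Memory of a node of degree d: its colors of rounds 0, 1, ..., L - 1, the
   bits received so far on each port, and the number of bits already sent on
   each port. *)
Definition memory (d : nat) : countType :=
  (seq nat * {ffun 'I_d -> seq bool} * {ffun 'I_d -> nat})%type.

Definition init_memory (d : nat) : memory d := ([::], [ffun => [::]], [ffun => 0]).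

Definition output := option {ffun 'I_K -> rat}.

(* The next color, from the known colors cs and the list dec p decoded on
   each port p: the neighbour's port towards us followed by its colors. *)
Definition next_color d (xv : nat) (cs : seq nat) (dec : 'I_d -> seq nat) : nat :=
  if cs == [::] then pickle (xv, [::] : seq (nat * nat))
  else pickle (last 0 cs,
    [seq (nth 0 (dec p) (size cs), nth 0 (dec p) 0) | p <- enum 'I_d]).

Definition extend d (xv : nat) (cs : seq nat) (h : {ffun 'I_d -> seq bool}) :
    seq nat :=
  let dec p := decode (h p) in
  if [forall p, size cs < size (dec p)] then rcons cs (next_color xv cs dec) else cs.

Definition output_of (cs : seq nat) : output :=
  if cs == [::] then None else Some (estimate K (last 0 cs) (size cs).-1).

(* One round: store the incoming bits, extend the colors if possible, output
   the current estimate, and send on each port p the next bit of the code of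
   p :: colors (so the neighbour learns its port back to us). *)
Definition step d (st : 'I_K * memory d * output * {ffun 'I_d -> option bool}) :
    'I_K * memory d * output * {ffun 'I_d -> option bool} :=
  let xi := st.1.1.1 in let cs := st.1.1.2.1.1 in
  let h := st.1.1.2.1.2 in let sent := st.1.1.2.2 in
  let h' := [ffun p => h p ++ seq_of_opt (st.2 p)] in
  let cs' := extend (val xi) cs h' in
  let code p := encl (val p :: cs') in
  (xi, (cs', h', [ffun p => sent p + (sent p < size (code p))]), output_of cs',
   [ffun p => if sent p < size (code p) then Some (nth false (code p) (sent p))
              else None]).

Definition proportion_automaton : automaton 'I_K output (option bool) memory :=
  @Automaton _ _ _ _ step (fun _ _ => erefl).

Section Run.
Variables (n : nat) (N : network n) (x : 'I_n -> 'I_K).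

Definition state t i := exec proportion_automaton init_memory None None N x t i.
Definition colors t i := (state t i).1.1.2.1.1.
Definition received t i := (state t i).1.1.2.1.2.
Definition sent t i := (state t i).1.1.2.2.
Definition message t i := (state t i).2.

Lemma state_value t i : (state t i).1.1.1 = x i.
Proof. by elim: t. Qed.

Lemma received_step t i p : received t.+1 i p =
  received t i p ++ seq_of_opt (message t (nbr N i p) (back N i p)).
Proof. by rewrite /received /= !ffunE. Qed.

Lemma colors_step t i :
  colors t.+1 i = extend (values x i) (colors t i) (received t.+1 i).
Proof. by rewrite /colors /= state_value. Qed.

Lemma sent_step t i p : sent t.+1 i p =
  sent t i p + (sent t i p < size (encl (val p :: colors t.+1 i))).
Proof. by rewrite /sent /= ffunE. Qed.

Lemma message_step t i p : message t.+1 i p =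
  let code := encl (val p :: colors t.+1 i) in
  if sent t i p < size code then Some (nth false code (sent t i p)) else None.
Proof. by rewrite /message /= ffunE. Qed.

Lemma output_step t i : (state t.+1 i).1.2 = output_of (colors t.+1 i).
Proof. by []. Qed.

Definition true_colors i L := [seq color N (values x) j i | j <- iota 0 L].
Definition stream i (q : nat) L := encl (q :: true_colors i L).

Lemma size_true_colors i L : size (true_colors i L) = L.
Proof. by rewrite size_map size_iota. Qed.

Lemma nth_true_colors i L j :
  j < L -> nth 0 (true_colors i L) j = color N (values x) j i.
Proof. by move=> lt_j; rewrite (nth_map 0) ?size_iota // nth_iota. Qed.

Lemma true_colorsS i L :
  true_colors i L.+1 = rcons (true_colors i L) (color N (values x) L i).
Proof. by rewrite /true_colors -addn1 iotaD map_cat cats1. Qed.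

Lemma take_true_colors i L L' : L <= L' -> take L (true_colors i L') = true_colors i L.
Proof. by move=> le_L; rewrite -map_take take_iota (minn_idPl le_L). Qed.

Lemma stream_prefix i q L L' :
  L <= L' -> exists r, stream i q L' = stream i q L ++ r.
Proof.
move=> /subnKC <-; rewrite /stream /true_colors iotaD map_cat -cat_cons encl_cat.
by eexists.
Qed.

Lemma size_stream_le i q L L' :
  L <= L' -> size (stream i q L) <= size (stream i q L').
Proof. by move=> /(stream_prefix i q) [r ->]; rewrite size_cat leq_addr. Qed.

Lemma output_true_colors i L :
  output_of (true_colors i L.+1) = Some (estimate K (color N (values x) L i) L).
Proof. by rewrite /output_of -size_eq0 size_true_colors true_colorsS last_rcons. Qed.

Lemma decode_stream j q a Lj L : L < size (decode (take a (stream j q Lj))) ->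
  let dec := decode (take a (stream j q Lj)) in
  nth 0 dec 0 = q /\ (0 < L -> nth 0 dec L = color N (values x) L.-1 j).
Proof.
have [k [-> _]] := decode_prefix (q :: true_colors j Lj) a.
rewrite size_take /= size_true_colors => lt_L.
have [lt_Lk lt_LLj] : L < k /\ L < Lj.+1.
  by case: (ltnP k Lj.+1) lt_L => [lt_k | le_k] lt_L; split=> //;
    [exact: ltn_trans lt_L lt_k | exact: leq_trans lt_L le_k].
rewrite !nth_take ?(leq_ltn_trans (leq0n _) lt_Lk) //; split=> // L_gt0.
by rewrite -(prednK L_gt0) /= nth_true_colors // -ltnS prednK.
Qed.

Lemma extend_true_colors i L (h : {ffun 'I_(deg N i) -> seq bool}) :
  (forall p, exists a Lj, h p = take a (stream (nbr N i p) (back N i p) Lj)) ->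
  let cs := extend (values x i) (true_colors i L) h in
  cs = true_colors i L \/ cs = true_colors i L.+1.
Proof.
move=> h_prefix; rewrite /extend size_true_colors.
case: forallP => [long | _]; [right | by left].
rewrite true_colorsS; congr rcons; rewrite /next_color -size_eq0 size_true_colors.
case: L long => [|L] long //.
rewrite color_succ true_colorsS last_rcons /=.
congr (pickle (_, _)); rewrite -val_enum_ord -map_comp; apply: eq_map => p /=.
have [a [Lj h_p]] := h_prefix p.
have := long p; rewrite h_p => /decode_stream [port_p col_p].
by rewrite port_p col_p // nbrn_val backn_val.
Qed.

Lemma size_colors_step t i : size (colors t i) <= size (colors t.+1 i).
Proof. by rewrite colors_step /extend; case: forallP; rewrite ?size_rcons. Qed.

Definition run_invariant t :=
  [/\ forall i, colors t i = true_colors i (size (colors t i)),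
      forall i p, sent t i p <= size (stream i p (size (colors t i))) &
      forall i p, received t.+1 i p = take (sent t (nbr N i p) (back N i p))
        (stream (nbr N i p) (back N i p) (size (colors t (nbr N i p))))].

Lemma code_stream t i (q : nat) : colors t i = true_colors i (size (colors t i)) ->
  encl (q :: colors t i) = stream i q (size (colors t i)).
Proof. by rewrite /stream => <-. Qed.

Lemma run_invariant_holds t : run_invariant t.
Proof.
elim: t => [|t [true_cs sent_le recv_eq]].
  split=> [//| i p | i p]; first by rewrite /sent /= ffunE.
  by rewrite received_step /received /message /sent /= !ffunE take0.
have true_cs' i : colors t.+1 i = true_colors i (size (colors t.+1 i)).
  rewrite colors_step true_cs; set L := size (colors t i).
  have prefix p : exists a Lj, received t.+1 i p
      = take a (stream (nbr N i p) (back N i p) Lj).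
    by rewrite recv_eq; eexists; eexists.
  by case: (extend_true_colors L prefix) => ->; rewrite size_true_colors.
split=> // [i p | i p].
  rewrite sent_step code_stream //.
  case: ltnP => [lt_sent | _]; first by rewrite addn1.
  by rewrite addn0 (leq_trans (sent_le i p)) // size_stream_le // size_colors_step.
rewrite received_step recv_eq message_step sent_step /=.
set j := nbr N i p; set q := back N i p; rewrite code_stream //.
have [r stream_r] := stream_prefix j q (size_colors_step t j).
exact: take_next_bit (sent_le j q) stream_r.
Qed.

Lemma sent_catches_up j (q : 'I_(deg N j)) S T :
  (forall t, T <= t -> S <= size (encl (val q :: colors t j))) ->
  forall t, T + S <= t -> S <= sent t j q.
Proof.
move=> long_code.
have grow m : minn S m <= sent (T + m) j q.
  elim: m => [|m IH]; first by rewrite minn0.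
  rewrite addnS sent_step; case: (leqP S (sent (T + m) j q)) => [le_S | lt_S].
    by rewrite (leq_trans (geq_minl _ _)) // (leq_trans le_S) ?leq_addr.
  have -> : sent (T + m) j q < size (encl (val q :: colors (T + m).+1 j)).
    by rewrite (leq_trans lt_S) // long_code // -addnS leq_addr.
  lia.
move=> t le_t; have := grow (t - T); rewrite subnKC; lia.
Qed.

Lemma received_long L :
  eventually (fun t => forall i, L <= size (colors t i)) ->
  forall i p, eventually (fun t => L < size (decode (received t.+1 i p))).
Proof.
move=> [T know_L] i p; set j := nbr N i p; set q := back N i p.
set S := size (stream j q L).
have long_code t : T <= t -> S <= size (encl (val q :: colors t j)).
  move=> le_t; have [true_cs _ _] := run_invariant_holds t.
  by rewrite code_stream // size_stream_le // know_L.
exists (T + S) => t le_t; have [_ _ recv_eq] := run_invariant_holds t.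
have know_Lt : L <= size (colors t j).
  by rewrite know_L // (leq_trans (leq_addr _ _) le_t).
rewrite recv_eq -/j -/q /stream.
have [k [-> k_max]] :=
  decode_prefix (val q :: true_colors j (size (colors t j))) (sent t j q).
have le_Lk : L.+1 <= k.
  apply: k_max; first by rewrite /= size_true_colors ltnS.
  by rewrite /= take_true_colors // (sent_catches_up long_code le_t).
by rewrite size_take /= size_true_colors; case: ifP; rewrite // ltnS.
Qed.

Lemma progress L : eventually (fun t => forall i, L <= size (colors t i)).
Proof.
elim: L => [|L IH]; first by exists 0.
have [T know_L] := IH.
have [T' long] :=
  eventually_forall (fun i => eventually_forall (@received_long L IH i)).
exists (maxn T T').+1 => -[//|t]; rewrite ltnS geq_max => /andP [le_T le_T'] i.
case: (ltnP L (size (colors t i))) => [lt_L | le_L].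
  exact: leq_trans lt_L (size_colors_step t i).
have eq_L : size (colors t i) = L by apply/eqP; rewrite eqn_leq le_L know_L.
rewrite colors_step /extend; case: forallP => [_ | not_long].
  by rewrite size_rcons eq_L.
by case: not_long => p; rewrite eq_L long.
Qed.
End Run.
End Automaton.

Unset Implicit Arguments.
Theorem theorem4 (K : nat) :
  @computable_inf_mem 'I_K (option {ffun 'I_K -> rat}) None
    (fun n x => Some (proportions x)).
Proof.
exists _, None, memory, init_memory, (proportion_automaton K) => n _ N x.
have [s0 st] := stable_exists N (values x).
have [T know] := progress N x (s0 + n).*2.+1.
exists T.+1 => -[//|t] le_t i.
have [true_cs _ _] := run_invariant_holds N x t.+1.
rewrite output_step true_cs.
have := know t.+1 (ltnW le_t) i.
case: (size (colors N x t.+1 i)) => [//|L] le_L.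
by rewrite output_true_colors (estimate_correct _ st).
Qed.
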